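(* In the $q$-Onsager algebra $\mathcal O$, the elements $\xi_1=XY-YX$ and $\xi_2=X^2Y^2-Y^2X^2+(q^2+q^{-2})(YXYX-XYXY)$ commute if and only if $q^6\neq 1$.
   Context: Let $\mathbb F$ be a field and fix a nonzero $q\in\mathbb F$ with $q^4\neq 1$. Let $[3]_q=q^2+1+q^{-2}$. The $q$-Onsager algebra $\mathcal O$ is the associative $\mathbb F$-algebra with 1 defined by generators $X,Y$ and relations $X^3Y-[3]_q X^2YX+[3]_q XYX^2-YX^3 = -(q^2-q^{-2})^2(XY-YX)$ and $Y^3X-[3]_q Y^2XY+[3]_q YXY^2-XY^3 = -(q^2-q^{-2})^2(YX-XY)$. *)

From HB Require Import structures.
From mathcomp Require Import all_boot all_order all_algebra.
Set Implicit Arguments. Unset Strict Implicit. Unset Printing Implicit Defensive.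
Import GRing.Theory.
Local Open Scope ring_scope.

(* The q-Onsager algebra O over the field F is presented by generators X, Y
   and the two q-Dolan-Grady relations.  Since MathComp has no free
   (noncommutative) algebras / quotients by two-sided ideals, an identity
   "P(X,Y) = Q(X,Y) in O" is expressed by the defining universal property of
   a presented algebra: it holds in O iff it holds for every pair of elements
   x, y of every F-algebra A satisfying the defining relations (O itself being
   one such algebra, and every such pair being the image of (X,Y) under an
   algebra map O -> A). *)

Section QOnsager.
Variables (F : fieldType) (q : F).

Definition qint3 : F := q ^+ 2 + 1 + q ^- 2.

Definition qDG_coef : F := (q ^+ 2 - q ^- 2) ^+ 2.

Definition qOnsager_rel1 (A : algType F) (x y : A) : Prop :=
  x ^+ 3 * y - qint3 *: (x ^+ 2 * y * x) + qint3 *: (x * y * x ^+ 2) - y * x ^+ 3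
  = - (qDG_coef *: (x * y - y * x)).

Definition qOnsager_rel2 (A : algType F) (x y : A) : Prop :=
  y ^+ 3 * x - qint3 *: (y ^+ 2 * x * y) + qint3 *: (y * x * y ^+ 2) - x * y ^+ 3
  = - (qDG_coef *: (y * x - x * y)).

Definition holds_in_qOnsager
  (P Q : forall A : algType F, A -> A -> A) : Prop :=
  forall (A : algType F) (x y : A),
    qOnsager_rel1 x y -> qOnsager_rel2 x y -> P A x y = Q A x y.

Definition xi1 (A : algType F) (x y : A) : A := x * y - y * x.

Definition xi2 (A : algType F) (x y : A) : A :=
  x ^+ 2 * y ^+ 2 - y ^+ 2 * x ^+ 2
  + (q ^+ 2 + q ^- 2) *: (y * x * y * x - x * y * x * y).

End QOnsager.

From HB Require Import structures.
From mathcomp Require Import all_boot all_order all_algebra.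
From mathcomp Require Import ring.
Import GRing.Theory.
Local Open Scope ring_scope.

Set Implicit Arguments. Unset Strict Implicit.

(* Write s = q^2 + q^-2, so that [3]_q = s + 1, and let D1, D2 be the
   differences of the two sides of the q-Dolan-Grady relations.  In the free
   algebra on x, y one has the identity
     (s + 1) [xi1, xi2] = r (D1 + D2) + y^2 D1 + D1 y^2 + x^2 D2 + D2 x^2
                          - s (y D1 y + x D2 x)          (r arbitrary),
   so xi1 and xi2 commute in O whenever [3]_q <> 0, i.e. q^6 <> 1.
   Conversely, if q^6 = 1 then q^2 is a primitive cube root of unity, so
   [3]_q = 0, s = -1, (q^2 - q^-2)^2 = -3 and 3 <> 0.  The relations then
   reduce to [x^3, y] = 3 [x, y] and [y^3, x] = 3 [y, x], which hold for two
   3 x 3 matrices annihilated by t^3 - 3t - 2, and for a suitable such pair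
   [xi1, xi2] has an entry 3^4 <> 0. *)

Section NcPoly.
Variable R : comNzRingType.

Definition ncpoly := seq (R * seq bool).

Definition ncpoly1 : ncpoly := [:: (1, [::])].

Definition ncpoly_scale (c : R) (p : ncpoly) : ncpoly :=
  [seq (c * m.1, m.2) | m <- p].

Definition ncpoly_mul (p r : ncpoly) : ncpoly :=
  [seq (m.1 * n.1, m.2 ++ n.2) | m <- p, n <- r].

Fixpoint ncpoly_insert (m : R * seq bool) (p : ncpoly) : ncpoly :=
  if p is n :: p' then
    if n.2 == m.2 then (m.1 + n.1, n.2) :: p' else n :: ncpoly_insert m p'
  else [:: m].

Definition ncpoly_collect (p : ncpoly) : ncpoly := foldr ncpoly_insert [::] p.

Inductive ncterm :=
  | NcX | NcY | NcZero | NcOne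
  | NcAdd of ncterm & ncterm | NcMul of ncterm & ncterm
  | NcScale of R & ncterm | NcOpp of ncterm | NcExp of ncterm & nat.

Fixpoint ncterm_poly (t : ncterm) : ncpoly :=
  match t with
  | NcX => [:: (1, [:: false])]
  | NcY => [:: (1, [:: true])]
  | NcZero => [::]
  | NcOne => ncpoly1
  | NcAdd a b => ncterm_poly a ++ ncterm_poly b
  | NcMul a b => ncpoly_mul (ncterm_poly a) (ncterm_poly b)
  | NcScale c a => ncpoly_scale c (ncterm_poly a)
  | NcOpp a => ncpoly_scale (-1) (ncterm_poly a)
  | NcExp a n => iter n (ncpoly_mul (ncterm_poly a)) ncpoly1
  end.

Definition ncpoly_coefs0 (p : ncpoly) : Prop := foldr (fun m P => m.1 = 0 /\ P) True p.

Variables (A : algType R) (x y : A).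

Fixpoint word_eval (w : seq bool) : A :=
  if w is b :: w' then (if b then y else x) * word_eval w' else 1.

Definition ncpoly_eval (p : ncpoly) : A := \sum_(m <- p) m.1 *: word_eval m.2.

Fixpoint ncterm_eval (t : ncterm) : A :=
  match t with
  | NcX => x
  | NcY => y
  | NcZero => 0
  | NcOne => 1
  | NcAdd a b => ncterm_eval a + ncterm_eval b
  | NcMul a b => ncterm_eval a * ncterm_eval b
  | NcScale c a => c *: ncterm_eval a
  | NcOpp a => - ncterm_eval a
  | NcExp a n => ncterm_eval a ^+ n
  end.

Lemma word_eval_cat w1 w2 : word_eval (w1 ++ w2) = word_eval w1 * word_eval w2.
Proof. by elim: w1 => [|b w IH] /=; rewrite ?mul1r // IH mulrA. Qed.

Lemma ncpoly_eval_cat p r : ncpoly_eval (p ++ r) = ncpoly_eval p + ncpoly_eval r.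
Proof. exact: big_cat. Qed.

Lemma ncpoly_eval1 : ncpoly_eval ncpoly1 = 1.
Proof. by rewrite /ncpoly_eval big_seq1 scale1r. Qed.

Lemma ncpoly_eval_scale c p : ncpoly_eval (ncpoly_scale c p) = c *: ncpoly_eval p.
Proof.
by rewrite /ncpoly_eval big_map scaler_sumr; apply: eq_bigr => m _; rewrite scalerA.
Qed.

Lemma ncpoly_eval_mul p r :
  ncpoly_eval (ncpoly_mul p r) = ncpoly_eval p * ncpoly_eval r.
Proof.
rewrite /ncpoly_eval big_allpairs_dep mulr_suml; apply: eq_bigr => m _.
rewrite mulr_sumr; apply: eq_bigr => n _.
by rewrite word_eval_cat -scalerAl -scalerAr scalerA.
Qed.

Lemma ncpoly_eval_insert m p :
  ncpoly_eval (ncpoly_insert m p) = m.1 *: word_eval m.2 + ncpoly_eval p.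
Proof.
elim: p => [|n p IH] /=; first by rewrite /ncpoly_eval big_seq1 big_nil addr0.
rewrite /ncpoly_eval; case: eqP => [<-|_]; rewrite !big_cons -!/(ncpoly_eval _) /=.
  by rewrite scalerDl addrA.
by rewrite IH addrCA.
Qed.

Lemma ncpoly_eval_collect p : ncpoly_eval (ncpoly_collect p) = ncpoly_eval p.
Proof.
elim: p => [|m p IH] //=.
by rewrite ncpoly_eval_insert IH /ncpoly_eval big_cons.
Qed.

Lemma ncterm_evalE t : ncterm_eval t = ncpoly_eval (ncterm_poly t).
Proof.
elim: t => /=.
- by rewrite /ncpoly_eval big_seq1 scale1r /= mulr1.
- by rewrite /ncpoly_eval big_seq1 scale1r /= mulr1.
- by rewrite /ncpoly_eval big_nil.
- by rewrite ncpoly_eval1.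
- by move=> a -> b ->; rewrite ncpoly_eval_cat.
- by move=> a -> b ->; rewrite ncpoly_eval_mul.
- by move=> c a ->; rewrite ncpoly_eval_scale.
- by move=> a ->; rewrite ncpoly_eval_scale scaleN1r.
- move=> a -> n; elim: n => [|n IH]; first by rewrite expr0 ncpoly_eval1.
  by rewrite exprS IH /= ncpoly_eval_mul.
Qed.

Lemma ncpoly_eval_coefs0 p : ncpoly_coefs0 p -> ncpoly_eval p = 0.
Proof.
elim: p => [|m p IH] /=; first by rewrite /ncpoly_eval big_nil.
by case=> m0 /IH p0; rewrite /ncpoly_eval big_cons -/(ncpoly_eval _) p0 m0 scale0r addr0.
Qed.

Lemma ncterm_eval_eq t1 t2 :
  ncpoly_coefs0 (ncpoly_collect (ncterm_poly (NcAdd t1 (NcOpp t2)))) ->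
  ncterm_eval t1 = ncterm_eval t2.
Proof.
move/ncpoly_eval_coefs0; rewrite ncpoly_eval_collect -ncterm_evalE /=.
by move/eqP; rewrite subr_eq0 => /eqP.
Qed.

End NcPoly.

Ltac reify_ncterm R x y e :=
  lazymatch e with
  | x => constr:(@NcX R)
  | y => constr:(@NcY R)
  | 0 => constr:(@NcZero R)
  | 1 => constr:(@NcOne R)
  | ?a + ?b =>
      let a' := reify_ncterm R x y a in let b' := reify_ncterm R x y b in
      constr:(NcAdd a' b')
  | ?a * ?b =>
      let a' := reify_ncterm R x y a in let b' := reify_ncterm R x y b in
      constr:(NcMul a' b')
  | ?c *: ?a => let a' := reify_ncterm R x y a in constr:(@NcScale R c a')
  | - ?a => let a' := reify_ncterm R x y a in constr:(NcOpp a')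
  | ?a ^+ ?n => let a' := reify_ncterm R x y a in constr:(NcExp a' n)
  end.

(* Normalizes both sides to linear combinations of words in x, y; the
   remaining coefficient equations are commutative and are left to [ring]. *)
Ltac nc_ring R x y :=
  lazymatch goal with
  | |- ?e1 = ?e2 =>
      let t1 := reify_ncterm R x y e1 in let t2 := reify_ncterm R x y e2 in
      apply: (@ncterm_eval_eq R _ x y t1 t2);
      cbn; repeat split; ring
  end.

Section DolanGrady.
Variables (F : fieldType) (A : algType F).

Definition dolan_grady (a r : F) (x y : A) : A :=
  x ^+ 3 * y - a *: (x ^+ 2 * y * x) + a *: (x * y * x ^+ 2) - y * x ^+ 3
  + r *: (x * y - y * x).

Lemma xi_commutator_dolan_grady (q r : F) (x y : A) :
  let D1 := dolan_grady (qint3 q) r x y in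
  let D2 := dolan_grady (qint3 q) r y x in
  qint3 q *: (xi1 x y * xi2 q x y - xi2 q x y * xi1 x y) =
  r *: (D1 + D2) + (y ^+ 2 * D1 + D1 * y ^+ 2 + x ^+ 2 * D2 + D2 * x ^+ 2)
  - (q ^+ 2 + q ^- 2) *: (y * D1 * y + x * D2 * x).
Proof. by rewrite /= /dolan_grady /xi1 /xi2 /qint3; nc_ring F x y. Qed.

Lemma dolan_grady_cubic (c d : F) (x y : A) :
  x ^+ 3 = c *: x + d%:A -> dolan_grady 0 (- c) x y = 0.
Proof. by rewrite /dolan_grady => ->; nc_ring F x y. Qed.

Lemma qOnsager_rel1E (q : F) (x y : A) :
  qOnsager_rel1 q x y <-> dolan_grady (qint3 q) (qDG_coef q) x y = 0.
Proof.
by rewrite /dolan_grady; split=> /eqP; [rewrite -addr_eq0 | rewrite addr_eq0] => /eqP.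
Qed.

Lemma qOnsager_rel2E (q : F) (x y : A) :
  qOnsager_rel2 q x y <-> dolan_grady (qint3 q) (qDG_coef q) y x = 0.
Proof. exact: qOnsager_rel1E. Qed.

End DolanGrady.

Section QArithmetic.
Variables (F : fieldType) (q : F).
Hypotheses (q_neq0 : q != 0) (q4_neq1 : q ^+ 4 != 1).

Let q2_neq1 : q ^+ 2 - 1 != 0.
Proof.
by apply: contra q4_neq1; rewrite subr_eq0 => /eqP q2; rewrite (exprM q 2 2) q2 expr1n.
Qed.

Lemma qint3_eq0 : (qint3 q == 0) = (q ^+ 6 == 1).
Proof.
rewrite -[q ^+ 6 == 1]subr_eq0 -[q ^+ 6 - 1](_ : qint3 q * (q ^+ 2 * (q ^+ 2 - 1)) = _).
  by rewrite !mulf_eq0 (negbTE q_neq0) (negbTE q2_neq1) !orbF.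
by rewrite /qint3; field.
Qed.

Hypothesis qint3_0 : qint3 q = 0.

Lemma qint3_0_sum : q ^+ 2 + q ^- 2 = -1.
Proof. by apply/eqP; rewrite -subr_eq0 -qint3_0 /qint3; apply/eqP; ring. Qed.

Lemma qint3_0_qDG_coef : qDG_coef q = - 3%:R.
Proof.
have -> : qDG_coef q = (q ^+ 2 + q ^- 2) ^+ 2 - 4%:R by rewrite /qDG_coef; field.
by rewrite qint3_0_sum; ring.
Qed.

Lemma qint3_0_natr3 : 3%:R != 0 :> F.
Proof.
apply: contra q2_neq1 => /eqP three0.
have : (q ^+ 2 - 1) ^+ 2 = qint3 q * q ^+ 2 - 3%:R * q ^+ 2 by rewrite /qint3; field.
by rewrite qint3_0 three0 !mul0r subr0 => /eqP; rewrite expf_eq0.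
Qed.

End QArithmetic.

Section Matrix3.
Variable R : comNzRingType.

Definition mx3 (a b c d e f g h k : R) : 'M[R]_3 :=
  \matrix_(i < 3, j < 3) nth 0 (nth [::] [:: [:: a; b; c]; [:: d; e; f]; [:: g; h; k]] i) j.

Ltac mx3_ext := apply/matrixP => - [[|[|[|?]]] ?] [[|[|[|?]]] ?] //;
  rewrite !mxE ?big_ord_recr ?big_ord0 /= ?mxE //=.

Lemma mx3_mul a b c d e f g h k a' b' c' d' e' f' g' h' k' :
  mx3 a b c d e f g h k * mx3 a' b' c' d' e' f' g' h' k' =
  mx3 (a*a' + b*d' + c*g') (a*b' + b*e' + c*h') (a*c' + b*f' + c*k')
      (d*a' + e*d' + f*g') (d*b' + e*e' + f*h') (d*c' + e*f' + f*k')
      (g*a' + h*d' + k*g') (g*b' + h*e' + k*h') (g*c' + h*f' + k*k').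
Proof. by mx3_ext; rewrite add0r. Qed.

Lemma mx3_add a b c d e f g h k a' b' c' d' e' f' g' h' k' :
  mx3 a b c d e f g h k + mx3 a' b' c' d' e' f' g' h' k' =
  mx3 (a+a') (b+b') (c+c') (d+d') (e+e') (f+f') (g+g') (h+h') (k+k').
Proof. by mx3_ext. Qed.

Lemma mx3_opp a b c d e f g h k :
  - mx3 a b c d e f g h k = mx3 (-a) (-b) (-c) (-d) (-e) (-f) (-g) (-h) (-k).
Proof. by mx3_ext. Qed.

Lemma mx3_scale z a b c d e f g h k :
  z *: mx3 a b c d e f g h k = mx3 (z*a) (z*b) (z*c) (z*d) (z*e) (z*f) (z*g) (z*h) (z*k).
Proof. by mx3_ext. Qed.

Lemma mx3_1 : 1 = mx3 1 0 0 0 1 0 0 0 1.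
Proof. by mx3_ext. Qed.

Lemma mx3_entry10 a b c d e f g h k : mx3 a b c d e f g h k (inord 1) (inord 0) = d.
Proof. by rewrite mxE /= !inordK. Qed.

End Matrix3.

Section Model.
Variable R : comNzRingType.

(* Both matrices are annihilated by (t - 2) (t + 1)^2 = t^3 - 3 t - 2. *)
Definition model_X : 'M[R]_3 := mx3 2%:R 0 0 0 (-1) 1 0 0 (-1).
Definition model_Y : 'M[R]_3 := mx3 2%:R 0 0 0 2%:R 0 1 0 (-1).

Lemma model_X_cubic : model_X ^+ 3 = 3%:R *: model_X + 2%:R%:A.
Proof.
rewrite /model_X mx3_1 !mx3_scale mx3_add !exprS expr0 mulr1 !mx3_mul.
by congr (mx3 _ _ _ _ _ _ _ _ _); ring.
Qed.

Lemma model_Y_cubic : model_Y ^+ 3 = 3%:R *: model_Y + 2%:R%:A.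
Proof.
rewrite /model_Y mx3_1 !mx3_scale mx3_add !exprS expr0 mulr1 !mx3_mul.
by congr (mx3 _ _ _ _ _ _ _ _ _); ring.
Qed.

End Model.

Lemma model_xi_commutator (F : fieldType) (q : F) : q ^+ 2 + q ^- 2 = -1 ->
  let X := model_X F in let Y := model_Y F in
  (xi1 X Y * xi2 q X Y - xi2 q X Y * xi1 X Y) (inord 1) (inord 0) = 3%:R ^+ 4.
Proof.
rewrite /xi1 /xi2 => -> /=; rewrite !expr2 /model_X /model_Y.
by rewrite !(mx3_mul, mx3_opp, mx3_add, mx3_scale) mx3_entry10; ring.
Qed.

Section Commutation.
Variables (F : fieldType) (q : F).

Lemma qOnsager_xi_commute : qint3 q != 0 ->
  holds_in_qOnsager q (fun A x y => xi1 x y * xi2 q x y)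
                      (fun A x y => xi2 q x y * xi1 x y).
Proof.
move=> q3_neq0 A x y /qOnsager_rel1E D1 /qOnsager_rel2E D2.
have := xi_commutator_dolan_grady q (qDG_coef q) x y.
rewrite /= D1 D2 !(mulr0, mul0r, addr0, scaler0, subr0) => /eqP.
by rewrite scaler_eq0 (negbTE q3_neq0) subr_eq0 => /eqP.
Qed.

Lemma qOnsager_xi_noncommute : q != 0 -> q ^+ 4 != 1 -> qint3 q = 0 ->
  ~ holds_in_qOnsager q (fun A x y => xi1 x y * xi2 q x y)
                        (fun A x y => xi2 q x y * xi1 x y).
Proof.
move=> q_neq0 q4_neq1 q3_0 xi_comm.
have rel1 : qOnsager_rel1 q (model_X F) (model_Y F).
  apply/qOnsager_rel1E; rewrite q3_0 (qint3_0_qDG_coef q_neq0 q3_0).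
  exact/dolan_grady_cubic/model_X_cubic.
have rel2 : qOnsager_rel2 q (model_X F) (model_Y F).
  apply/qOnsager_rel2E; rewrite q3_0 (qint3_0_qDG_coef q_neq0 q3_0).
  exact/dolan_grady_cubic/model_Y_cubic.
have := model_xi_commutator (qint3_0_sum q3_0).
rewrite /= (xi_comm _ _ _ rel1 rel2) subrr mxE => /esym/eqP.
by rewrite expf_eq0 (negbTE (qint3_0_natr3 q_neq0 q4_neq1 q3_0)) andbF.
Qed.

End Commutation.

Theorem proposition9p4 (F : fieldType) (q : F) (hq0 : q != 0)
    (hq4 : q ^+ 4 != 1) :
  holds_in_qOnsager q
    (fun A x y => xi1 x y * xi2 q x y)
    (fun A x y => xi2 q x y * xi1 x y)
  <-> q ^+ 6 != 1.
Proof.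
rewrite -(qint3_eq0 hq0 hq4).
split=> [xi_comm|]; last exact: qOnsager_xi_commute.
by apply/eqP => q3_0; apply: (qOnsager_xi_noncommute hq0 hq4 q3_0).
Qed.
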